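(* Let $M\in S_d^+$, let $\mathcal T$ be an $M$-reduced mesh and $\Lambda$ the associated Hopf–Lax operator. Let $\delta_+,\delta_-:\mathbb Z^d\to\mathbb R_+\cup\{\infty\}$ be respectively a discrete super-solution and a discrete sub-solution. Then $\delta_-\le\delta_+$ on $\mathbb Z^d$.
   Context: $S_d^+$ is the set of $d\times d$ symmetric positive definite matrices; $\langle u,v\rangle_M:=u^TMv$, $\|u\|_M:=\sqrt{\langle u,u\rangle_M}$. An $M$-reduced mesh is a finite conforming mesh $\mathcal T$ of simplices in $\mathbb R^d$ such that: (I) the union of its simplices is a neighborhood of the origin; (II) the vertices of each $T\in\mathcal T$ lie in $\mathbb Z^d$ and $T$ has volume $1/d!$; (III) each $T\in\mathcal T$ has the origin as a vertex, and its other vertices $v_1,\dots,v_d$ satisfy $\langle v_i,v_j\rangle_M\ge0$ for all $i,j$. For $\delta:\mathbb Z^d\to\mathbb R_+\cup\{\infty\}$ and $z\in\mathbb Z^d$, $\Lambda(\delta,z):=\min\{\|\sum_{i=1}^k\alpha_iv_i\|_M+\sum_{i=1}^k\alpha_i\delta(z+v_i)\}$ over $1\le k\le d$, $\alpha_i\ge0$ with $\sum_i\alpha_i=1$, and non-zero vertices $v_1,\dots,v_k$ of a common simplex of $\mathcal T$ (convention $0\times\infty=0$). A map $\delta:\mathbb Z^d\to\mathbb R_+\cup\{\infty\}$ is a super-solution (resp. sub-solution) if $\delta(0)=0$ and $\delta(z)\ge\Lambda(\delta,z)$ (resp. $\delta(z)\le\Lambda(\delta,z)$) for all $z\in\mathbb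 Z^d\setminus\{0\}$. *)

From HB Require Import structures.
From mathcomp Require Import all_boot all_order all_algebra.
From mathcomp Require Import all_classical all_reals all_analysis.
Set Implicit Arguments. Unset Strict Implicit. Unset Printing Implicit Defensive.
Import Order.TTheory GRing.Theory Num.Theory.
Import numFieldNormedType.Exports.
Local Open Scope classical_set_scope.
Local Open Scope ring_scope.

Section Defs.
Variables (R : realType) (d : nat).

Definition toR (z : 'rV[int]_d) : 'rV[R]_d := map_mx (fun x : int => x%:~R) z.

Definition sym_pos_def (M : 'M[R]_d) : Prop :=
  M^T = M /\ forall u : 'rV[R]_d, u != 0 -> 0 < (u *m M *m u^T) 0 0.

Definition scalM (M : 'M[R]_d) (u v : 'rV[R]_d) : R := (u *m M *m v^T) 0 0.
Definition normM (M : 'M[R]_d) (u : 'rV[R]_d) : R := Num.sqrt (scalM M u u).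

(* A simplex of the mesh having the origin as a vertex is represented by the
   d x d integer matrix whose rows are its other vertices v_1, ..., v_d;
   the simplex is conv(0, v_1, ..., v_d). *)
Definition in_simplex (T : 'M[int]_d) (x : 'rV[R]_d) : Prop :=
  exists lam : 'I_d -> R, [/\ forall i, 0 <= lam i, \sum_i lam i <= 1 &
     x = \sum_i lam i *: toR (row i T)].

Definition is_vertex (T : 'M[int]_d) (v : 'rV[int]_d) : Prop :=
  exists i, v = row i T.

Definition simplex_volume (T : 'M[int]_d) : R :=
  `|(\det T)%:~R| / (d`!)%:R.

(* Conformity: the intersection of two simplices of the mesh is their common
   face, i.e. the convex hull of their common vertices (0 is always one). *)
Definition conforming (mesh : seq 'M[int]_d) : Prop :=
  forall T T', T \in mesh -> T' \in mesh -> forall x : 'rV[R]_d,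
    in_simplex T x -> in_simplex T' x ->
    exists lam : 'I_d -> R, [/\ forall i, 0 <= lam i, \sum_i lam i <= 1,
      forall i, lam i != 0 -> is_vertex T' (row i T) &
      x = \sum_i lam i *: toR (row i T)].

Definition M_reduced_mesh (M : 'M[R]_d) (mesh : seq 'M[int]_d) : Prop :=
  [/\ conforming mesh,
      (\forall x \near (0 : 'rV[R]_d), exists2 T, T \in mesh & in_simplex T x),
      (* (II) integer vertices (built in) and volume 1/d! *)
      (forall T, T \in mesh -> simplex_volume T = 1 / (d`!)%:R) &
      (forall T, T \in mesh -> forall i j,
          0 <= scalM M (toR (row i T)) (toR (row j T)))].

Local Open Scope ereal_scope.

(* The Hopf-Lax operator.  The paper's "min" is attained, so it equals this
   infimum.  Extended-real multiplication satisfies 0 * +oo = 0. *)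
Definition HopfLax (M : 'M[R]_d) (mesh : seq 'M[int]_d)
    (delta : 'rV[int]_d -> \bar R) (z : 'rV[int]_d) : \bar R :=
  ereal_inf [set y | exists (k : nat) (alpha : 'I_k -> R)
      (v : 'I_k -> 'rV[int]_d) (T : 'M[int]_d),
      [/\ (1 <= k <= d)%N, T \in mesh, forall i, is_vertex T (v i) &
          (forall i, (0 <= alpha i)%R) /\ (\sum_i alpha i = 1)%R] /\
      y = (normM M (\sum_i alpha i *: toR (v i)))%:E
              + \sum_i (alpha i)%:E * delta ((z + v i)%R)].

Definition nonneg_ext (delta : 'rV[int]_d -> \bar R) : Prop :=
  forall z, 0 <= delta z.

Definition super_solution M mesh (delta : 'rV[int]_d -> \bar R) : Prop :=
  delta 0%R = 0 /\ forall z, z != 0%R -> delta z >= HopfLax M mesh delta z.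

Definition sub_solution M mesh (delta : 'rV[int]_d -> \bar R) : Prop :=
  delta 0%R = 0 /\ forall z, z != 0%R -> delta z <= HopfLax M mesh delta z.

End Defs.

From HB Require Import structures.
From mathcomp Require Import all_boot all_order all_algebra.
From mathcomp Require Import all_classical all_reals all_analysis.
From mathcomp Require Import ring lra.
Set Implicit Arguments.
Unset Strict Implicit.
Unset Printing Implicit Defensive.
Import Order.TTheory GRing.Theory Num.Theory.
Local Open Scope ring_scope.

(* For t in (0,1) we show t delta_- <= delta_+, which suffices.  If not, let
   m be the infimum of delta_+ over the bad points, where delta_+ z <
   t delta_- z.  By acuteness the M-norm of a convex combination of the
   vertices of a simplex is monotone in the weights, so every Hopf-Lax step
   costs at least some c > 0.  At a bad point z with delta_+ z < m + eta take
   a near-optimal stencil for delta_+; dropping the weights of its bad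
   neighbours, whose values are >= m, and renormalizing gives a stencil for
   delta_-.  Scaling by t saves (1 - t) c = 4 eta on the step cost, whence
   t delta_- z < m <= delta_+ z, so z is not bad. *)

Section NormM.
Variables (R : realType) (d : nat) (M : 'M[R]_d).

Lemma scalM_sum k (a b : 'I_k -> R) (u : 'I_k -> 'rV[R]_d) :
  scalM M (\sum_i a i *: u i) (\sum_j b j *: u j) =
  \sum_i \sum_j a i * b j * scalM M (u i) (u j).
Proof.
rewrite /scalM raddf_sum /= mulmx_sumr summxE.
rewrite exchange_big /=; apply: eq_bigr => j _.
rewrite mulmx_suml mulmx_suml summxE; apply: eq_bigr => i _.
rewrite linearZ /= -scalemxAr -scalemxAl -scalemxAl !mxE.
by rewrite mulrA [b j * a i]mulrC.
Qed.

Lemma normMZ (a : R) (u : 'rV[R]_d) :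
  0 <= a -> normM M (a *: u) = a * normM M u.
Proof.
move=> a0; rewrite /normM /scalM -scalemxAl linearZ /= -scalemxAr -scalemxAl.
rewrite scalerA mxE sqrtrM ?mulr_ge0 //.
by rewrite -expr2 sqrtr_sqr ger0_norm.
Qed.

Section Acute.
Variables (k : nat) (u : 'I_k -> 'rV[R]_d).
Hypothesis acute_u : forall i j, 0 <= scalM M (u i) (u j).

Lemma acute_normM_le (a b : 'I_k -> R) :
  (forall i, 0 <= b i <= a i) ->
  normM M (\sum_i b i *: u i) <= normM M (\sum_i a i *: u i).
Proof.
move=> hab; have a0 i : 0 <= a i by case/andP: (hab i) => /le_trans; apply.
rewrite /normM ler_sqrt; last first.
  by rewrite scalM_sum; do 2![apply: sumr_ge0 => ? _]; rewrite !mulr_ge0.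
rewrite !scalM_sum; apply: ler_sum => i _; apply: ler_sum => j _.
apply: ler_wpM2r => //; case/andP: (hab i) => bi0 bia; case/andP: (hab j) => bj0 bja.
exact: ler_pM.
Qed.

Lemma acute_normM_ge_term (a : 'I_k -> R) j :
  (forall i, 0 <= a i) -> a j * normM M (u j) <= normM M (\sum_i a i *: u i).
Proof.
move=> a0; rewrite -normMZ //.
have -> : a j *: u j = \sum_i (if i == j then a j else 0) *: u i.
  by rewrite (bigD1 j) //= eqxx big1 ?addr0 // => i /negbTE ->; rewrite scale0r.
by apply: acute_normM_le => i; case: eqP => [->|_]; rewrite lexx a0.
Qed.

End Acute.
End NormM.

Lemma convex_weight_ge_inv (R : realFieldType) k (a : 'I_k -> R) :
  (0 < k)%N -> \sum_i a i = 1 -> exists j, k%:R^-1 <= a j.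
Proof.
move=> k0 a1; case: (boolP [exists j, k%:R^-1 <= a j]) => [/existsP //|].
move=> /existsPn small; have : \sum_(i < k) a i < \sum_(i < k) k%:R^-1.
  apply: ltr_sum => [|i _]; last by rewrite ltNge small.
  by apply/hasP; exists (Ordinal k0); rewrite ?mem_index_enum.
rewrite a1 sumr_const card_ord -[X in _ < X]mulr_natr mulVf ?ltxx //.
by rewrite pnatr_eq0 -lt0n.
Qed.

Lemma seq_lower_bound_gt0 (R : realDomainType) (X : eqType) (s : seq X)
    (g : X -> R) :
  (forall x, x \in s -> 0 < g x) ->
  exists2 b, 0 < b & forall x, x \in s -> b <= g x.
Proof.
elim: s => [|y s IH] gs_gt0; first by exists 1.
have [b b0 hb] : exists2 b, 0 < b & forall x, x \in s -> b <= g x.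
  by apply: IH => x xs; apply: gs_gt0; rewrite inE xs orbT.
have gy0 : 0 < g y by apply: gs_gt0; rewrite inE eqxx.
exists (Num.min b (g y)); first by rewrite lt_min b0 gy0.
by move=> x; rewrite inE ge_min => /orP[/eqP->|/hb->]; rewrite ?lexx ?orbT.
Qed.

Lemma det_row_eq0 (R : comNzRingType) n (A : 'M[R]_n) i :
  row i A = 0 -> \det A = 0.
Proof.
move=> Ai0; rewrite (expand_det_row _ i) big1 // => j _.
by have := congr1 (fun B : 'rV_n => B 0 j) Ai0; rewrite !mxE => ->; rewrite mul0r.
Qed.

Lemma toR_eq0 (R : realType) d (v : 'rV[int]_d) : toR R v = 0 -> v = 0.
Proof.
move=> v0; apply/matrixP => i j; have := congr1 (fun A : 'rV[R]_d => A i j) v0.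
by rewrite /toR !mxE => /eqP; rewrite intr_eq0 => /eqP.
Qed.

Lemma fin_num_EFinM_fine (R : realDomainType) (a : R) (x : \bar R) :
  (a%:E * x \is a fin_num -> a%:E * x = (a * fine x)%:E)%E.
Proof.
have [->|a0] := eqVneq a 0; first by rewrite mul0e mul0r.
by case: x => [r||] //; rewrite mulr_infty; case: sgrP a0;
  rewrite ?mul1e ?mulN1e.
Qed.

Lemma pmule_fin_num (R : realDomainType) (a : R) (x : \bar R) : 0 < a ->
  (a%:E * x \is a fin_num)%E = (x \is a fin_num).
Proof. by move=> a0; case: x => [r||] //; rewrite mulr_infty gtr0_sg // mul1e. Qed.

Section Mesh.
Variables (R : realType) (d : nat) (M : 'M[R]_d) (mesh : seq 'M[int]_d).

Lemma mesh_vertex_normM_lb : sym_pos_def M ->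
  (forall T, T \in mesh -> simplex_volume R T = 1 / (d`!)%:R) ->
  exists2 b, 0 < b & forall T i, T \in mesh -> b <= normM M (toR R (row i T)).
Proof.
move=> [_ Mpos] hvol.
have [|b b0 hb] := @seq_lower_bound_gt0 _ _ [seq row i T | T <- mesh, i <- enum 'I_d]
    (fun v => normM M (toR R v)).
  move=> _ /allpairsP [[T i] /= [hT _ ->]].
  rewrite /normM sqrtr_gt0; apply: Mpos; apply/eqP => /toR_eq0 /det_row_eq0 detT.
  have := hvol T hT; rewrite /simplex_volume detT mulr0z normr0 mul0r => /esym/eqP.
  by rewrite mul1r invr_eq0 pnatr_eq0 eqn0Ngt fact_gt0.
exists b => // T i hT; apply: hb.
by apply: (allpairs_f (fun T i => row i T)); rewrite ?mem_enum.
Qed.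

Definition admissible k (a : 'I_k -> R) (v : 'I_k -> 'rV[int]_d) T :=
  [/\ (1 <= k <= d)%N, T \in mesh, forall i, is_vertex T (v i) &
      (forall i, 0 <= a i) /\ \sum_i a i = 1].

Lemma admissible_acute k (a : 'I_k -> R) v T : M_reduced_mesh M mesh -> admissible a v T ->
  forall i j, 0 <= scalM M (toR R (v i)) (toR R (v j)).
Proof.
move=> [_ _ _ acute] [_ hT hv _] i j.
by have [i' ->] := hv i; have [j' ->] := hv j; apply: acute.
Qed.

Lemma admissible_rescale k a (b : 'I_k -> R) v T :
  admissible a v T -> (forall i, 0 <= b i) -> 0 < \sum_i b i ->
  admissible (fun i => b i / \sum_j b j) v T.
Proof.
move=> [hk hT hv _] b0 s0; split => //; split => [i|].
  by rewrite divr_ge0 // ltW.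
by rewrite -mulr_suml divff // gt_eqF.
Qed.

Lemma admissible_normM_lb : sym_pos_def M -> M_reduced_mesh M mesh ->
  exists2 c, 0 < c & forall k (a : 'I_k -> R) v T, admissible a v T ->
    c <= normM M (\sum_i a i *: toR R (v i)).
Proof.
move=> hM hmesh; have [_ _ hvol _] := hmesh.
have [b b0 hb] := mesh_vertex_normM_lb hM hvol.
exists (b / d.+1%:R) => [|k a v T hadm]; first by rewrite divr_gt0.
have acute := admissible_acute hmesh hadm.
case: hadm => /andP[k1 kd] hT hv [a0 a1].
have [j aj] := convex_weight_ge_inv k1 a1.
apply: le_trans (acute_normM_ge_term acute j a0).
have [i ->] := hv j; apply: (@le_trans _ _ (k%:R^-1 * b)).
  rewrite mulrC ler_pM2r // lef_pV2 ?posrE ?ltr0n // ler_nat.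
  exact: leqW.
by apply: ler_pM; rewrite ?invr_ge0 ?ler0n ?hb // ltW.
Qed.

Local Open Scope ereal_scope.

Definition HopfLax_value (delta : 'rV[int]_d -> \bar R) z k (a : 'I_k -> R)
    (v : 'I_k -> 'rV[int]_d) : \bar R :=
  (normM M (\sum_i a i *: toR R (v i)))%:E + \sum_i (a i)%:E * delta (z + v i)%R.

Lemma HopfLax_le_value delta z k (a : 'I_k -> R) v T :
  admissible a v T -> HopfLax M mesh delta z <= HopfLax_value delta z a v.
Proof. by move=> hadm; apply: ereal_inf_lbound; exists k, a, v, T. Qed.

Lemma HopfLax_gt_value delta z x : HopfLax M mesh delta z < x ->
  exists k (a : 'I_k -> R) v T, admissible a v T /\ HopfLax_value delta z a v < x.
Proof.
by move=> /ereal_inf_lt [y [k [a [v [T [hadm ->]]]]] hy]; exists k, a, v, T.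
Qed.

Lemma sub_solution_le_rescaled delta z k (a b q : 'I_k -> R) v T :
  sub_solution M mesh delta -> z != 0%R -> admissible a v T ->
  (forall i, (0 <= b i)%R) -> (0 < \sum_i b i)%R ->
  (forall i, (0 < b i)%R -> delta (z + v i)%R <= (q i)%:E) ->
  delta z <= ((normM M (\sum_i b i *: toR R (v i)) + \sum_i b i * q i)
               / \sum_i b i)%:E.
Proof.
move=> [_ hsub] z0 hadm b0 s0 hq; set s := (\sum_i b i)%R.
apply: le_trans (hsub z z0) _.
apply: le_trans (HopfLax_le_value _ _ (admissible_rescale hadm b0 s0)) _.
rewrite /HopfLax_value -/s.
have -> : normM M (\sum_i (b i / s) *: toR R (v i)) =
    (normM M (\sum_i b i *: toR R (v i)) / s)%R.
  rewrite mulrC -normMZ ?invr_ge0 ?ltW // scaler_sumr.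
  by congr normM; apply: eq_bigr => i _; rewrite scalerA mulrC.
rewrite mulrDl EFinD; apply: leeD => //.
rewrite mulr_suml -sumEFin; apply: lee_sum => i _.
have [bi0|bi_gt0] := eqVneq (b i) 0%R; first by rewrite bi0 !mul0r mul0e.
have {}bi_gt0 : (0 < b i)%R by rewrite lt_neqAle eq_sym bi_gt0 b0.
rewrite mulrAC [in X in _ <= X]EFinM; apply: lee_wpmul2l; last exact: hq.
by rewrite lee_fin divr_ge0 // ltW.
Qed.

Lemma super_solution_witness delta z (P eta : R) :
  nonneg_ext delta -> super_solution M mesh delta -> z != 0%R ->
  delta z = P%:E -> (0 < eta)%R ->
  exists k (a : 'I_k -> R) v T (p : 'I_k -> R),
    [/\ admissible a v T, forall i, (0 <= p i)%R,
        forall i, (0 < a i)%R -> delta (z + v i)%R = (p i)%:E &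
        (normM M (\sum_i a i *: toR R (v i)) + \sum_i a i * p i < P + eta)%R].
Proof.
move=> delta0 [_ hsup] z0 hz eta0.
have [k [a [v [T [hadm hval]]]]] : exists k (a : 'I_k -> R) v T,
    admissible a v T /\ HopfLax_value delta z a v < (P + eta)%:E.
  by apply: HopfLax_gt_value; rewrite (le_lt_trans (hsup z z0)) // hz lte_fin ltrDl.
have [_ _ _ [a0 _]] := hadm.
have terms_fin i : (a i)%:E * delta (z + v i)%R \is a fin_num.
  have : HopfLax_value delta z a v \is a fin_num.
    rewrite ge0_fin_numE ?(lt_trans hval) ?ltry // adde_ge0 ?lee_fin ?sqrtr_ge0 //.
    by apply: sume_ge0 => j _; rewrite mule_ge0 ?lee_fin.
  by rewrite fin_numD => /andP[_ /sum_fin_numP]; apply.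
exists k, a, v, T, (fun i => fine (delta (z + v i)%R)); split => //.
- by move=> i; exact: fine_ge0.
- by move=> i ai0; rewrite fineK // -(pmule_fin_num _ ai0).
rewrite -lte_fin EFinD -sumEFin.
by rewrite (eq_bigr _ (fun i _ => esym (fin_num_EFinM_fine (terms_fin i)))).
Qed.

End Mesh.

Section Comparison.
Variables (R : realType) (d : nat) (M : 'M[R]_d) (mesh : seq 'M[int]_d).
Variables (delta_p delta_m : 'rV[int]_d -> \bar R) (t : R).
Hypotheses (hM : sym_pos_def M) (hmesh : M_reduced_mesh M mesh).
Hypothesis delta_p_ge0 : nonneg_ext delta_p.
Hypotheses (super_p : super_solution M mesh delta_p)
  (sub_m : sub_solution M mesh delta_m).
Hypotheses (t_gt0 : 0 < t) (t_lt1 : t < 1).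

Local Open Scope ereal_scope.

Let bad z := delta_p z < t%:E * delta_m z.
Let m := ereal_inf [set delta_p z | z in bad].

Lemma bad_neq0 z : bad z -> z != 0%R.
Proof.
apply: contraTN => /eqP->; rewrite /bad (proj1 super_p) (proj1 sub_m).
by rewrite mule0 ltxx.
Qed.

Lemma scaled_sub_solution_le zs k (a b p : 'I_k -> R) v T :
  zs != 0%R -> admissible mesh a v T ->
  (forall i, (0 <= b i)%R) -> (0 < \sum_i b i)%R ->
  (forall i, (0 < b i)%R -> t%:E * delta_m (zs + v i)%R <= (p i)%:E) ->
  t%:E * delta_m zs <= ((t * normM M (\sum_i b i *: toR R (v i)) + \sum_i b i * p i)
                        / \sum_i b i)%:E.
Proof.
move=> zs0 hadm b_ge0 s_gt0 good_le.
have good_le' i : (0 < b i)%R -> delta_m (zs + v i)%R <= (p i / t)%:E.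
  by move=> bi_gt0; rewrite mulrC EFinM lee_pdivlMl // good_le.
apply: le_trans (lee_wpmul2l _ (sub_solution_le_rescaled sub_m zs0 hadm b_ge0 s_gt0 good_le')) _.
  by rewrite lee_fin ltW.
rewrite -EFinM lee_fin le_eqVlt; apply/orP; left; apply/eqP.
have -> : (\sum_i b i * (p i / t) = (\sum_i b i * p i) / t)%R.
  by rewrite mulr_suml; apply: eq_bigr => i _; rewrite mulrA.
by field; rewrite !gt_eqF.
Qed.

Section DropBad.
Variables (zs : 'rV[int]_d) (k : nat) (a p : 'I_k -> R) (v : 'I_k -> 'rV[int]_d).
Hypothesis a_ge0 : forall i, (0 <= a i)%R.
Hypothesis pE : forall i, (0 < a i)%R -> delta_p (zs + v i)%R = (p i)%:E.

Definition good_weight i := if bad (zs + v i)%R then 0%R else a i.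

Lemma good_weight_le i : (0 <= good_weight i <= a i)%R.
Proof. by rewrite /good_weight; case: ifP; rewrite lexx a_ge0. Qed.

Lemma good_neighbour_scaled_le i : (0 < good_weight i)%R ->
  t%:E * delta_m (zs + v i)%R <= (p i)%:E.
Proof.
rewrite /good_weight; case: ifPn => [_|good_i ai_gt0]; first by rewrite ltxx.
by rewrite -pE // leNgt.
Qed.

Lemma bad_weights_ge_inf (mr : R) : m = mr%:E -> (\sum_i a i = 1)%R ->
  (\sum_i good_weight i * p i + (1 - \sum_i good_weight i) * mr
     <= \sum_i a i * p i)%R.
Proof.
move=> mE a1; rewrite -a1 -sumrB mulr_suml -big_split /=; apply: ler_sum => i _.
rewrite /good_weight; case: ifPn => [bad_i|_]; last by rewrite subrr mul0r addr0.
rewrite mul0r add0r subr0; have [->|ai0] := eqVneq (a i) 0%R; first by rewrite !mul0r.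
apply: ler_wpM2l => //.
rewrite -lee_fin -mE -pE; last by rewrite lt_neqAle eq_sym ai0 a_ge0.
by apply: ereal_inf_lbound; exists (zs + v i)%R.
Qed.

End DropBad.

Lemma bad_ge_inf_gap (c mr : R) : (0 < c)%R ->
    (forall k (a : 'I_k -> R) v T, admissible mesh a v T ->
       (c <= normM M (\sum_i a i *: toR R (v i)))%R) ->
  m = mr%:E -> forall zs, bad zs -> (mr + (1 - t) * c / 4)%:E <= delta_p zs.
Proof.
move=> c_gt0 step_lb mE zs bad_zs; set eta := ((1 - t) * c / 4)%R.
have eta_gt0 : (0 < eta)%R by rewrite !divr_gt0 ?mulr_gt0 ?subr_gt0.
rewrite leNgt; apply/negP => near_inf; have zs0 := bad_neq0 bad_zs.
have pfin : delta_p zs \is a fin_num.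
  by rewrite ge0_fin_numE ?(lt_trans near_inf) ?ltry.
set P := fine (delta_p zs); have PE : delta_p zs = P%:E by rewrite fineK.
have [k [a [v [T [p [hadm p_ge0 pE cost_lt]]]]]] :=
  super_solution_witness delta_p_ge0 super_p zs0 PE eta_gt0.
have acute := admissible_acute hmesh hadm; have [_ _ _ [a_ge0 a1]] := hadm.
set b := good_weight zs a v; have b_le := good_weight_le zs v a_ge0.
have b_ge0 i : (0 <= b i)%R by case/andP: (b_le i).
set s := (\sum_i b i)%R; set wb := normM M (\sum_i b i *: toR R (v i)).
have := bad_weights_ge_inf a_ge0 pE mE a1; rewrite -/b -/s => drop_bad.
have wb_le := acute_normM_le acute b_le; have c_le := step_lb _ _ _ _ hadm.
have near_inf_real : (P < mr + eta)%R by rewrite -lte_fin -PE.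
have key : (t * wb + \sum_i b i * p i < s * mr)%R.
  have : (t * wb <= t * normM M (\sum_i a i *: toR R (v i)))%R.
    by rewrite ler_wpM2l // ltW.
  have : ((1 - t) * c <= (1 - t) * normM M (\sum_i a i *: toR R (v i)))%R.
    by rewrite ler_wpM2l // subr_ge0 ltW.
  have : (0 < (1 - t) * c)%R by rewrite mulr_gt0 // subr_gt0.
  rewrite /eta in cost_lt near_inf_real; lra.
have s_gt0 : (0 < s)%R.
  have : (0 <= t * wb + \sum_i b i * p i)%R.
    apply: addr_ge0; first by apply: mulr_ge0; [exact: ltW | exact: sqrtr_ge0].
    by apply: sumr_ge0 => i _; rewrite mulr_ge0.
  have : (0 <= s)%R by rewrite sumr_ge0.
  rewrite le_eqVlt => /predU1P[s0|//]; rewrite -s0 mul0r in key; lra.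
have := scaled_sub_solution_le zs0 hadm b_ge0 s_gt0 (good_neighbour_scaled_le pE).
rewrite -/s -/wb => sub_zs.
have : t%:E * delta_m zs < m.
  by rewrite mE; apply: le_lt_trans sub_zs _; rewrite lte_fin ltr_pdivrMr // [(mr * s)%R]mulrC.
apply/negP; rewrite -leNgt; apply: le_trans (ltW bad_zs).
by apply: ereal_inf_lbound; exists zs.
Qed.

Lemma scaled_sub_le_super z : t%:E * delta_m z <= delta_p z.
Proof.
have [c c_gt0 step_lb] := admissible_normM_lb hM hmesh.
rewrite leNgt; apply/negP => bad_z.
have m_fin : m \is a fin_num.
  rewrite ge0_fin_numE; last by apply/ereal_infP => _ [y _ <-].
  by apply: le_lt_trans (lt_le_trans bad_z (leey _)); apply: ereal_inf_lbound; exists z.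
have m_lt : m < (fine m + (1 - t) * c / 4)%R%:E.
  rewrite -[X in X < _](fineK m_fin) lte_fin ltrDl.
  by rewrite !divr_gt0 ?mulr_gt0 ?subr_gt0.
have [_ [zs bad_zs <-] near_inf] := ereal_inf_lt m_lt.
have := bad_ge_inf_gap c_gt0 step_lb (esym (fineK m_fin)) bad_zs.
by rewrite leNgt near_inf.
Qed.

End Comparison.

Theorem proposition1p4 (R : realType) (d : nat) (M : 'M[R]_d)
    (mesh : seq 'M[int]_d) (delta_p delta_m : 'rV[int]_d -> \bar R) :
  sym_pos_def M -> M_reduced_mesh M mesh ->
  nonneg_ext delta_p -> nonneg_ext delta_m ->
  super_solution M mesh delta_p -> sub_solution M mesh delta_m ->
  forall z : 'rV[int]_d, (delta_m z <= delta_p z)%E.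
Proof.
move=> hM hmesh delta_p_ge0 delta_m_ge0 super_p sub_m z.
apply/(lee_mul01Pr _ (delta_m_ge0 z)) => t /andP[t_gt0 t_lt1].
exact: scaled_sub_le_super hM hmesh delta_p_ge0 super_p sub_m t_gt0 t_lt1 z.
Qed.
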